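(* Let $q$ be a prime power, let $\mathbb{F}=\mathrm{GF}(q^2)$, and let $H\subseteq \mathbb{F}^\ast$ be the (unique) subgroup of the multiplicative group of order $q+1$. Let $G(q^2,q+1)$ be the graph whose vertex set is $(\mathbb{F}\times\mathbb{F}\setminus\{(0,0)\})/\sim$, where $(a_1,b_1)\sim(a_2,b_2)$ iff there is $h\in H$ with $a_1=ha_2$ and $b_1=hb_2$, and in which two distinct vertices $\langle a,b\rangle$ and $\langle x,y\rangle$ are adjacent iff $ax+by\in H$. Then $G(q^2,q+1)$ is $K_{3,3}$-free.
   Context: $\langle a,b\rangle$ denotes the equivalence class of the pair $(a,b)$; the adjacency condition does not depend on the chosen representatives. The graph is simple (no loops). A graph is $K_{s,t}$-free if it contains no (not necessarily induced) subgraph isomorphic to the complete bipartite graph $K_{s,t}$. *)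

From mathcomp Require Import all_boot all_algebra all_fingroup all_field.
Set Implicit Arguments. Unset Strict Implicit. Unset Printing Implicit Defensive.
Import GRing.Theory.
Local Open Scope ring_scope.

Definition prime_power (q : nat) : Prop :=
  exists p k : nat, [/\ prime p, (0 < k)%N & q = (p ^ k)%N].

Definition Hset (F : finFieldType) (H : {set {unit F}}) : {set F} :=
  [set val h | h in H].

Definition vclass (F : finFieldType) (H : {set {unit F}}) (p : F * F)
  : {set F * F} := [set (val h * p.1, val h * p.2) | h in H].

Definition vertices (F : finFieldType) (H : {set {unit F}}) : {set {set F * F}} :=
  [set vclass H p | p in [set p : F * F | p != (0, 0)]].

(* adjacency: distinct classes with representatives (a,b),(x,y), ax+by in H
   (independent of the representatives) *)
Definition adj (F : finFieldType) (H : {set {unit F}}) (C D : {set F * F}) : bool :=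
  (C != D) &&
  [exists p in C, exists r in D, p.1 * r.1 + p.2 * r.2 \in Hset H].

Definition Kst_free (V : finType) (Vs : {set V}) (e : rel V) (s t : nat) : Prop :=
  ~ exists A B : {set V},
      [/\ A \subset Vs, B \subset Vs, [disjoint A & B],
          #|A| = s & #|B| = t] /\
      (forall a b, a \in A -> b \in B -> e a b).

From mathcomp Require Import all_boot all_algebra all_fingroup all_field.
From mathcomp Require Import cyclic ring.
Set Implicit Arguments. Unset Strict Implicit. Unset Printing Implicit Defensive.
Import GRing.Theory FinRing.Theory.
Local Open Scope ring_scope.

(* Adjacency of <u> and <v> means u.v in H, and H is the set of norm-one
   elements x ^+ q.+1 = 1 of GF(q^2). If <u1>, <u2>, <u3> are distinct and
   have a common neighbour, then u1 and u2 are linearly independent, so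
   u3 = a u1 + b u2 with a, b nonzero. For every common neighbour <v> both
   t = (u2.v)/(u1.v) and a + b t lie in H; taking norms and using
   t ^+ q = t^-1 makes t a root of the nonzero quadratic
   b a^q t^2 + (a^(q+1) + b^(q+1) - 1) t + a b^q. Distinct common neighbours
   give distinct values of t, so there are at most two of them. *)

Lemma quadratic_roots_le2 (F : fieldType) (c2 c1 c0 : F) (ts : seq F) :
  c2 != 0 -> uniq ts -> {in ts, forall t, c2 * t ^+ 2 + c1 * t + c0 = 0} ->
  (size ts <= 2)%N.
Proof.
move=> c2_neq0 ts_uniq ts_roots.
have size_p : size (Poly [:: c0; c1; c2]) = 3 by rewrite (PolyK (c := 0)).
rewrite -ltnS -[3%N]size_p max_poly_roots //; first by rewrite -size_poly_gt0 size_p.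
apply/allP => t /ts_roots t_root; rewrite /root horner_Poly /= -[X in _ == X]t_root.
by apply/eqP; ring.
Qed.

Section PairAlgebra.
Variable F : fieldType.
Implicit Types (l : F) (u v x y : F * F).

Definition dot2 u v := u.1 * v.1 + u.2 * v.2.
Definition det2 u v := u.1 * v.2 - u.2 * v.1.
Definition scale2 l u := (l * u.1, l * u.2).

Lemma dot2Zl l u v : dot2 (scale2 l u) v = l * dot2 u v.
Proof. by rewrite /dot2 /=; ring. Qed.

Lemma dot2Zr l u v : dot2 u (scale2 l v) = l * dot2 u v.
Proof. by rewrite /dot2 /=; ring. Qed.

Lemma det2_cramer u1 u2 u3 v :
  det2 u1 u2 * dot2 u3 v = det2 u3 u2 * dot2 u1 v + det2 u1 u3 * dot2 u2 v.
Proof. by rewrite /det2 /dot2; ring. Qed.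

Lemma det2_eq0_scale2 u u' :
  u != (0, 0) -> det2 u u' = 0 -> exists l, u' = scale2 l u.
Proof.
case: u u' => [a b] [c d] u_neq0; rewrite /det2 /= => /eqP; rewrite subr_eq0 => /eqP ad_bc.
have [a_eq0 | a_neq0] := eqVneq a 0.
  move: u_neq0 ad_bc; rewrite {}a_eq0 mul0r => u_neq0 /esym/eqP.
  have b_neq0 : b != 0 by apply: contra_neq u_neq0 => ->.
  rewrite mulf_eq0 (negbTE b_neq0) => /eqP ->.
  by exists (d / b); rewrite /scale2 /= mulr0 divfK.
exists (c / a); rewrite /scale2 /= divfK //; congr (_, _).
by apply: (mulfI a_neq0); rewrite ad_bc [RHS]mulrC mulrAC divfK // mulrC.
Qed.

Lemma det2_anti u v : det2 v u = - det2 u v.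
Proof. by rewrite /det2; ring. Qed.

Lemma dot2_inj u1 u2 x y : det2 u1 u2 != 0 ->
  dot2 u1 x = dot2 u1 y -> dot2 u2 x = dot2 u2 y -> x = y.
Proof.
move=> det_neq0 eq1 eq2.
have fst_cramer z : det2 u1 u2 * z.1 = u2.2 * dot2 u1 z - u1.2 * dot2 u2 z.
  by rewrite /det2 /dot2; ring.
have snd_cramer z : det2 u1 u2 * z.2 = u1.1 * dot2 u2 z - u2.1 * dot2 u1 z.
  by rewrite /det2 /dot2; ring.
apply: injective_projections; apply: (mulfI det_neq0).
  by rewrite !fst_cramer eq1 eq2.
by rewrite !snd_cramer eq1 eq2.
Qed.

End PairAlgebra.

Section NormOneElements.
Variables (F : fieldType) (q : nat) (K : {pred F}).
Hypothesis K_div : {in K &, forall x y, x / y \in K}.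
Hypothesis K_norm1 : {in K, forall x, x ^+ q.+1 = 1}.
Hypothesis frobenius_add : forall x y : F, (x + y) ^+ q = x ^+ q + y ^+ q.
Implicit Types (u v : F * F).

Definition K_multiple u u' := exists2 l, l \in K & u' = scale2 l u.

Lemma K_neq0 x : x \in K -> x != 0.
Proof.
by move/K_norm1; apply: contraPneq => ->; rewrite expr0n => /eqP; rewrite eq_sym oner_eq0.
Qed.

Lemma det2_neq0 u u' v :
  dot2 u v \in K -> dot2 u' v \in K -> ~ K_multiple u u' -> det2 u u' != 0.
Proof.
move=> uv_K u'v_K not_mult; apply/eqP => det_eq0; apply: not_mult.
have u_neq0 : u != (0, 0).
  by apply: contraTneq uv_K => ->; apply/negP => /K_neq0; rewrite /dot2 /= !mul0r addr0 eqxx.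
have [l u'_def] := det2_eq0_scale2 u_neq0 det_eq0.
exists l => //; have := K_div u'v_K uv_K.
by rewrite u'_def dot2Zl mulfK // K_neq0.
Qed.

Lemma K_multiple_of_ratio u1 u2 v v' : det2 u1 u2 != 0 ->
  dot2 u1 v \in K -> dot2 u1 v' \in K ->
  dot2 u2 v / dot2 u1 v = dot2 u2 v' / dot2 u1 v' -> K_multiple v v'.
Proof.
move=> det_neq0 v_K v'_K ratio_eq; have s_neq0 := K_neq0 v_K; have s'_neq0 := K_neq0 v'_K.
exists (dot2 u1 v' / dot2 u1 v); first exact: K_div.
apply: (dot2_inj det_neq0); rewrite dot2Zr ?divfK //.
by rewrite mulrAC -mulrA ratio_eq mulrC divfK.
Qed.

Lemma norm1_quadratic (a b t : F) : t ^+ q.+1 = 1 -> (a + b * t) ^+ q.+1 = 1 ->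
  b * a ^+ q * t ^+ 2 + (a ^+ q.+1 + b ^+ q.+1 - 1) * t + a * b ^+ q = 0.
Proof.
rewrite exprS => t_norm1; rewrite exprS frobenius_add exprMn => abt_norm1.
transitivity (t * ((a + b * t) * (a ^+ q + b ^+ q * t ^+ q)) - t); last first.
  by rewrite abt_norm1 mulr1 subrr.
have -> : t * ((a + b * t) * (a ^+ q + b ^+ q * t ^+ q)) =
          (a + b * t) * (a ^+ q * t + b ^+ q * (t * t ^+ q)) by ring.
by rewrite t_norm1 !exprS; ring.
Qed.

Lemma ratio_quadratic u1 u2 u3 v
    (a := det2 u3 u2 / det2 u1 u2) (b := det2 u1 u3 / det2 u1 u2)
    (t := dot2 u2 v / dot2 u1 v) :
  det2 u1 u2 != 0 -> dot2 u1 v \in K -> dot2 u2 v \in K -> dot2 u3 v \in K ->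
  b * a ^+ q * t ^+ 2 + (a ^+ q.+1 + b ^+ q.+1 - 1) * t + a * b ^+ q = 0.
Proof.
move=> det_neq0 u1v_K u2v_K u3v_K; apply: norm1_quadratic; first exact/K_norm1/K_div.
suff -> : a + b * t = dot2 u3 v / dot2 u1 v by apply/K_norm1/K_div.
have s_neq0 := K_neq0 u1v_K.
have u3v_def : dot2 u3 v =
    (det2 u3 u2 * dot2 u1 v + det2 u1 u3 * dot2 u2 v) / det2 u1 u2.
  by rewrite -det2_cramer mulrC mulKf.
by rewrite /a /b /t u3v_def; field; rewrite det_neq0 s_neq0.
Qed.

Lemma K33_free_pairs u1 u2 u3 v1 v2 v3 :
  ~ K_multiple u1 u2 -> ~ K_multiple u1 u3 -> ~ K_multiple u2 u3 ->
  ~ K_multiple v1 v2 -> ~ K_multiple v1 v3 -> ~ K_multiple v2 v3 ->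
  ~ {in [:: u1; u2; u3] & [:: v1; v2; v3], forall u v, dot2 u v \in K}.
Proof.
move=> n12 n13 n23 m12 m13 m23 uv_K; set vs := [:: v1; v2; v3].
have [u1_K u2_K u3_K] : [/\ {in vs, forall v, dot2 u1 v \in K},
    {in vs, forall v, dot2 u2 v \in K} & {in vs, forall v, dot2 u3 v \in K}].
  by split=> v v_vs; apply: (uv_K _ v) => //; rewrite !inE eqxx ?orbT.
have [v1_vs v2_vs v3_vs] : [/\ v1 \in vs, v2 \in vs & v3 \in vs].
  by rewrite !inE !eqxx ?orbT.
have det12 : det2 u1 u2 != 0 by apply: (det2_neq0 (u1_K v1 _) (u2_K v1 _)).
have det13 : det2 u1 u3 != 0 by apply: (det2_neq0 (u1_K v1 _) (u3_K v1 _)).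
have det32 : det2 u3 u2 != 0.
  by rewrite det2_anti oppr_eq0; apply: (det2_neq0 (u2_K v1 _) (u3_K v1 _)).
pose a := det2 u3 u2 / det2 u1 u2; pose b := det2 u1 u3 / det2 u1 u2.
pose t v := dot2 u2 v / dot2 u1 v.
have leading_neq0 : b * a ^+ q != 0.
  by rewrite !mulf_neq0 ?expf_neq0 ?mulf_neq0 ?invr_eq0.
have t_inj v v' : v \in vs -> v' \in vs -> t v = t v' -> K_multiple v v'.
  by move=> v_vs v'_vs; apply: K_multiple_of_ratio; rewrite ?u1_K.
suff : (size [seq t v | v <- vs] <= 2)%N by [].
apply: (quadratic_roots_le2 (c1 := a ^+ q.+1 + b ^+ q.+1 - 1) (c0 := a * b ^+ q) leading_neq0).
  rewrite /= !inE !negb_or !andbT -andbA; apply/and3P; split; apply/eqP.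
  - by move/(t_inj _ _ v1_vs v2_vs).
  - by move/(t_inj _ _ v1_vs v3_vs).
  - by move/(t_inj _ _ v2_vs v3_vs).
by move=> _ /mapP [v v_vs ->]; apply: ratio_quadratic; rewrite ?u1_K ?u2_K ?u3_K.
Qed.

End NormOneElements.

Section Graph.
Variables (F : finFieldType) (H : {group {unit F}}).

Lemma Hset_div : {in Hset H &, forall x y, x / y \in Hset H}.
Proof.
move=> _ _ /imsetP [g Hg ->] /imsetP [h Hh ->].
by rewrite -val_unitV -val_unitM imset_f // groupM ?groupV.
Qed.

Lemma Hset_expcard : {in Hset H, forall x, x ^+ #|H| = 1}.
Proof. by move=> _ /imsetP [h Hh ->]; rewrite -val_unitX expg_cardG. Qed.

Lemma vclass_scale2 l u : l \in Hset H -> vclass H (scale2 l u) = vclass H u.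
Proof.
case/imsetP=> g Hg ->; apply/setP => x; apply/imsetP/imsetP => [] [h Hh ->].
  by exists (h * g)%g; rewrite ?groupM // val_unitM /scale2 /= !mulrA.
exists (h * g^-1)%g; first by rewrite groupM ?groupV.
have g_neq0 : val g != 0 by rewrite -unitfE; apply: valP.
by rewrite /scale2 /= !mulrA divfK.
Qed.

Lemma vclass_neq_K_multiple u u' :
  vclass H u != vclass H u' -> ~ K_multiple (Hset H) u u'.
Proof. by move=> neq [l Hl u'_def]; move: neq; rewrite u'_def vclass_scale2 ?eqxx. Qed.

Lemma adj_dot2 u v : adj H (vclass H u) (vclass H v) -> dot2 u v \in Hset H.
Proof.
case/andP=> _ /exists_inP [_ /imsetP [g Hg ->] /exists_inP [_ /imsetP [h Hh ->]]] /=.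
have gh_H : val (g * h)%g \in Hset H by rewrite imset_f ?groupM.
have gh_neq0 : val (g * h)%g != 0 by rewrite -unitfE; apply: valP.
rewrite (_ : _ + _ = val (g * h)%g * dot2 u v); last by rewrite val_unitM /dot2 /=; ring.
by move/Hset_div/(_ gh_H); rewrite mulrC mulKf.
Qed.

Lemma three_vertex_reps (A : {set {set F * F}}) : A \subset vertices H -> #|A| = 3 ->
  exists u1 u2 u3, [/\ vclass H u1 \in A, vclass H u2 \in A, vclass H u3 \in A &
    [&& vclass H u1 != vclass H u2, vclass H u1 != vclass H u3
      & vclass H u2 != vclass H u3]].
Proof.
move=> sAV cardA.
have /card_gt2P [C1 [C2 [C3 [[C1A C2A C3A] [C12 C23 C31]]]]] : (2 < #|A|)%N.
  by rewrite cardA.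
have rep C : C \in A -> exists u, C = vclass H u.
  by move=> /(subsetP sAV) /imsetP [u _ ->]; exists u.
have [u1 C1_def] := rep _ C1A; have [u2 C2_def] := rep _ C2A; have [u3 C3_def] := rep _ C3A.
subst C1 C2 C3; exists u1, u2, u3.
by rewrite C1A C2A C3A C12 C23 eq_sym C31.
Qed.

End Graph.

Theorem theorem2 (q : nat) (F : finFieldType) (H : {group {unit F}}) :
  prime_power q -> #|F| = (q ^ 2)%N -> #|H| = q.+1 ->
  Kst_free (vertices H) (@adj F H) 3 3.
Proof.
move=> [p [k [p_prime _ ->]]] cardF cardH [A [B [[sAV sBV _ cardA cardB] AB_adj]]].
have frobenius_add (x y : F) : (x + y) ^+ (p ^ k) = x ^+ (p ^ k) + y ^+ (p ^ k).
  apply: exprDn_pchar; rewrite pnatX pnatE // (@card_finPcharP _ p (k * 2)) //.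
  by rewrite cardF expnM.
have H_norm1 : {in Hset H, forall x, x ^+ (p ^ k).+1 = 1}.
  by rewrite -cardH; apply: Hset_expcard.
have [u1 [u2 [u3 [u1A u2A u3A /and3P [u12 u13 u23]]]]] := three_vertex_reps sAV cardA.
have [v1 [v2 [v3 [v1B v2B v3B /and3P [v12 v13 v23]]]]] := three_vertex_reps sBV cardB.
have uv_H : {in [:: u1; u2; u3] & [:: v1; v2; v3], forall u v, dot2 u v \in Hset H}.
  by move=> u v; rewrite !inE => /or3P [] /eqP -> /or3P [] /eqP ->; apply/adj_dot2/AB_adj.
by apply: (K33_free_pairs (@Hset_div F H) H_norm1 frobenius_add _ _ _ _ _ _ uv_H);
  apply: vclass_neq_K_multiple.
Qed.
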